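(* For all $n\ge0$, \[ p_n^2=p_n+2\sum_{k=0}^{n-5}\sum_{r=5}^{n-k}c_{r-5}p_k p_{n-k-r}^2 . \]
   Context: The Narayana's cows numbers $c_n$ are defined by $c_n=\delta_{n,0}+c_{n-1}+c_{n-3}$ for $n\ge0$, $c_n=0$ for $n<0$. The Padovan numbers $p_n$ are defined by $p_n=\delta_{n,0}+p_{n-2}+p_{n-3}$ for $n\ge0$, $p_n=0$ for $n<0$. $\delta_{i,j}$ is $1$ if $i=j$ and $0$ otherwise. Empty sums are $0$. *)

From mathcomp Require Import all_boot.
Set Implicit Arguments. Unset Strict Implicit. Unset Printing Implicit Defensive.

(* Narayana's cows numbers: c_n = [n=0] + c_{n-1} + c_{n-3}, c_n = 0 for n<0.
   Unfolded: c_0 = 1, c_1 = 1, c_2 = 1, c_{n+3} = c_{n+2} + c_n. *)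
Fixpoint cows (n : nat) : nat :=
  match n with
  | 0 => 1
  | 1 => 1
  | 2 => 1
  | ((m.+1 as k).+1 as j).+1 => cows j + cows m
  end.

(* Padovan numbers: p_n = [n=0] + p_{n-2} + p_{n-3}, p_n = 0 for n<0.
   Unfolded: p_0 = 1, p_1 = 0, p_2 = 1, p_{n+3} = p_{n+1} + p_n. *)
Fixpoint padovan (n : nat) : nat :=
  match n with
  | 0 => 1
  | 1 => 0
  | 2 => 1
  | ((m.+1 as k).+1 as j).+1 => padovan k + padovan m
  end.

Lemma cows_rec n : cows n.+3 = cows n.+2 + cows n. Proof. by []. Qed.
Lemma padovan_rec n : padovan n.+3 = padovan n.+1 + padovan n. Proof. by []. Qed.

From mathcomp Require Import all_boot.
From mathcomp Require Import zify.

Set Implicit Arguments.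
Unset Strict Implicit.
Unset Printing Implicit Defensive.

(* With P = 1/(1 - x^2 - x^3), C = 1/(1 - x - x^3) and Q = sum p_n^2 x^n, the
   claim reads Q = P + 2 x^5 P C Q.  Multiplied by (1 - x^2 - x^3)(1 - x - x^3),
   both sides become 1 - x - x^3 + 2 x^5 Q: the squares and the right-hand side
   obey the same inhomogeneous recurrence of order six, so it suffices to
   compare six initial terms. *)

Definition conv (f g : nat -> nat) n := \sum_(0 <= j < n.+1) f j * g (n - j).

Lemma convS f g n : conv f g n.+1 = f 0 * g n.+1 + conv (fun j => f j.+1) g n.
Proof. by rewrite /conv big_nat_recl //; under eq_bigr do rewrite subSS. Qed.

(* If f = f 0 / (1 - a x - b x^2 - c x^3), then (1 - a x - b x^2 - c x^3)(f g) = f 0 g. *)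
Lemma conv_rec3 f g a b c n :
  (forall j, f j.+3 = a * f j.+2 + b * f j.+1 + c * f j) ->
  f 1 = a * f 0 -> f 2 = a * f 1 + b * f 0 ->
  conv f g n.+3 = a * conv f g n.+2 + b * conv f g n.+1 + c * conv f g n + f 0 * g n.+3.
Proof.
move=> f_rec f1 f2.
have conv_f3 : conv (fun j => f j.+3) g n =
    a * conv (fun j => f j.+2) g n + b * conv (fun j => f j.+1) g n + c * conv f g n.
  rewrite /conv !big_distrr -!big_split; apply: eq_bigr => j _ /=.
  by rewrite f_rec !mulnDl !mulnA.
rewrite !convS conv_f3 f2 f1; lia.
Qed.

Definition sq n := padovan n ^ 2.

Definition cows_sq := conv cows sq.

Definition padovan_cows_sq := conv padovan cows_sq.

Lemma cows_sq_rec n : cows_sq n.+3 = cows_sq n.+2 + cows_sq n + sq n.+3.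
Proof. by rewrite /cows_sq (@conv_rec3 _ _ 1 0 1) //= => *; lia. Qed.

Lemma padovan_cows_sq_rec n :
  padovan_cows_sq n.+3 = padovan_cows_sq n.+1 + padovan_cows_sq n + cows_sq n.+3.
Proof. by rewrite /padovan_cows_sq (@conv_rec3 _ _ 0 1 1) //= => *; lia. Qed.

(* ((1 - x^2 - x^3)(1 - x - x^3) u)_(n+6) = f n, with the negative
   coefficients moved to the left so that no subtraction occurs. *)
Definition sextic_rec (u f : nat -> nat) :=
  forall n, u (n + 6) + u (n + 2) + u (n + 1) + u n = u (n + 5) + u (n + 4) + u (n + 3) + f n.

Lemma sextic_rec_factor u w v :
  (forall n, u n.+3 = u n.+1 + u n + w n.+3) ->
  (forall n, w n.+3 = w n.+2 + w n + v n.+3) ->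
  sextic_rec u (fun n => v (n + 6)).
Proof.
move=> u_rec w_rec n; rewrite !addnS !addn0.
have := u_rec n; have := u_rec n.+1; have := u_rec n.+2; have := u_rec n.+3.
have := w_rec n.+3; lia.
Qed.

Lemma sextic_rec_uniq u v f :
  sextic_rec u f -> sextic_rec v f -> (forall i, i < 6 -> u i = v i) -> u =1 v.
Proof.
move=> u_rec v_rec u_v_init.
suff window n : forall i, i < 6 -> u (n + i) = v (n + i).
  by move=> n; rewrite -[n]addn0 window.
elim: n => [|n IHn] i lti6; first exact: u_v_init.
rewrite addSnnS; move: lti6; rewrite ltnS leq_eqVlt => /predU1P[-> | lti5].
  2: exact: IHn i.+1 lti5.
have := u_rec n; have := v_rec n.
have := IHn 0 isT; have := IHn 1 isT; have := IHn 2 isT.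
have := IHn 3 isT; have := IHn 4 isT; have := IHn 5 isT.
rewrite addn0; lia.
Qed.

Lemma padovan_sextic_rec : sextic_rec padovan (fun => 0).
Proof. by apply: (@sextic_rec_factor _ (fun => 0) (fun => 0)) => n; rewrite addn0. Qed.

Lemma padovan_cows_sq_sextic_rec : sextic_rec padovan_cows_sq (fun n => sq (n + 6)).
Proof. exact: sextic_rec_factor padovan_cows_sq_rec cows_sq_rec. Qed.

Lemma sq_sextic_rec : sextic_rec (fun n => sq (n + 5)) (fun n => 2 * sq (n + 6)).
Proof. by move=> n; rewrite /sq !addnS !addn0 !padovan_rec !expnS !expn0; nia. Qed.

Lemma sq_padovan_cows_sq n : sq n.+4.+1 = padovan n.+4.+1 + 2 * padovan_cows_sq n.
Proof.
rewrite -[n.+4.+1]/(5 + n) addnC.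
apply: (sextic_rec_uniq sq_sextic_rec
          (v := fun n => padovan (n + 5) + 2 * padovan_cows_sq n)).
- move=> m; have := padovan_sextic_rec (m + 5); have := padovan_cows_sq_sextic_rec m.
  rewrite /= !addnS !addn0; lia.
- case=> [|[|[|[|[|[|i]]]]]] // _.
  all: by rewrite /padovan_cows_sq /cows_sq /conv /sq unlock; vm_compute.
Qed.

Lemma double_sum_padovan_cows_sq N :
  \sum_(0 <= k < N.+4.+1 - 4) \sum_(5 <= r < (N.+4.+1 - k).+1)
     cows (r - 5) * padovan k * padovan (N.+4.+1 - k - r) ^ 2 = padovan_cows_sq N.
Proof.
rewrite (_ : N.+4.+1 - 4 = N.+1) /padovan_cows_sq /conv; last lia.
apply: eq_big_nat => k /andP[_ ltkN].
rewrite -{1}(add0n 5) big_addn (_ : (N.+4.+1 - k).+1 - 5 = (N - k).+1); last lia.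
rewrite /cows_sq /conv big_distrr; apply: eq_bigr => j _.
have -> : N.+4.+1 - k - (j + 5) = N - k - j by lia.
by rewrite addnK /= mulnCA mulnA.
Qed.

Theorem mainTheorem17 (n : nat) :
  padovan n ^ 2 =
  padovan n + 2 * \sum_(0 <= k < n - 4)
                    \sum_(5 <= r < (n - k).+1)
                       cows (r - 5) * padovan k * padovan (n - k - r) ^ 2.
Proof.
case: n => [|[|[|[|[|N]]]]]; try by rewrite big_geq.
by rewrite double_sum_padovan_cows_sq -sq_padovan_cows_sq.
Qed.
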